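(* Let $\mathcal{G}$, $A$ and $L_k$ be as in the context, and for $\Phi\in\mathcal{O}_{\mathcal{I}}^+(n,k)$ let $\Phi^{\mathrm{cut}}(\Phi)=\|I-\Phi^TA\Phi\|$ and $\Phi^{\mathrm{cut}}_{\mathcal{G}}=\inf_{\Phi\in\mathcal{O}_{\mathcal{I}}^+(n,k)}\|I-\Phi^TA\Phi\|$. Then: (i) $\Phi^{\mathrm{cut}}\ge0$ and $\Phi^{\mathrm{cut}}$ is invariant under renumberings of the nodes (i.e. $\|I-(P\Phi)^T(PAP^T)(P\Phi)\|=\|I-\Phi^TA\Phi\|$ for every permutation matrix $P$); (ii) $\Phi^{\mathrm{cut}}_{\mathcal{G}}=0$ if and only if $\mathcal{G}$ is $k$-partitionable; (iii) the Cheeger inequality $L_k=\min_{Y^TY=I}\|I-Y^TAY\|\le\Phi^{\mathrm{cut}}_{\mathcal{G}}$ holds.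
   Context: $\mathcal{G}$ is an undirected graph on $n$ nodes with symmetric, entrywise nonnegative adjacency matrix $B$ with zero diagonal; $d=B(1,\dots,1)^T$ is assumed entrywise positive, $D=\operatorname{diag}(d)$, $A=D^{-1/2}BD^{-1/2}$ with eigenvalues $\lambda_1\ge\cdots\ge\lambda_n$ ($\lambda_1=1$), $L_k=\min_{Y\in\mathbb{R}^{n\times k},Y^TY=I}\|I-Y^TAY\|=\big(\sum_{\nu=2}^k(1-\lambda_\nu)^2\big)^{1/2}$, and $\|\cdot\|$ is the Frobenius norm. A matrix $X\in\mathbb{R}^{n\times k}$ is in indicator form if there is a partition of $\{1,\dots,n\}$ into $k$ disjoint nonempty sets $R_1,\dots,R_k$ such that $X_{pj}\neq0$ if and only if $p\in R_j$. $\mathcal{O}_{\mathcal{I}}(n,k)$ is the set of matrices in indicator form with $X^TX=I$, and $\mathcal{O}_{\mathcal{I}}^+(n,k)$ the set of entrywise nonnegative matrices in $\mathcal{O}_{\mathcal{I}}(n,k)$. The graph is $k$-partitionable if it has at least $k$ connected components. *)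

From HB Require Import structures.
From mathcomp Require Import all_boot all_order all_algebra all_fingroup.
From mathcomp Require Import reals.
Set Implicit Arguments. Unset Strict Implicit. Unset Printing Implicit Defensive.
Import Order.TTheory GRing.Theory Num.Theory.
Local Open Scope ring_scope.

Section Defs.
Variable R : realType.

Definition frob (m p : nat) (M : 'M[R]_(m, p)) : R :=
  Num.sqrt (\sum_(i < m) \sum_(j < p) M i j ^+ 2).

Definition degvec (n : nat) (B : 'M[R]_n) : 'cV[R]_n := B *m const_mx 1.

Definition adj_ok (n : nat) (B : 'M[R]_n) : Prop :=
  [/\ B^T = B, (forall i j, 0 <= B i j), (forall i, B i i = 0)
    & (forall i, 0 < degvec B i 0)].

Definition Dmhalf (n : nat) (B : 'M[R]_n) : 'M[R]_n :=
  diag_mx (\row_i (Num.sqrt (degvec B i 0))^-1).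

Definition normadj (n : nat) (B : 'M[R]_n) : 'M[R]_n :=
  Dmhalf B *m B *m Dmhalf B.

Definition indicator_form (n k : nat) (X : 'M[R]_(n, k)) : Prop :=
  exists Rs : 'I_k -> {set 'I_n},
    [/\ (forall j, Rs j != set0),
        (forall i j, i != j -> [disjoint Rs i & Rs j]),
        (\bigcup_(j < k) Rs j = [set: 'I_n])
      & (forall p j, X p j != 0 <-> p \in Rs j)].

Definition OI (n k : nat) (X : 'M[R]_(n, k)) : Prop :=
  indicator_form X /\ X^T *m X = 1%:M.

Definition OIplus (n k : nat) (X : 'M[R]_(n, k)) : Prop :=
  OI X /\ (forall p j, 0 <= X p j).

Definition phicut (n k : nat) (A : 'M[R]_n) (Phi : 'M[R]_(n, k)) : R :=
  frob (1%:M - Phi^T *m A *m Phi).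

Definition phicutG (n k : nat) (A : 'M[R]_n) : R :=
  inf (fun x : R => exists Phi : 'M[R]_(n, k), OIplus Phi /\ x = phicut A Phi).

Definition Lk (n k : nat) (A : 'M[R]_n) : R :=
  inf (fun x : R => exists Y : 'M[R]_(n, k), Y^T *m Y = 1%:M /\ x = phicut A Y).

Definition edge (n : nat) (B : 'M[R]_n) : rel 'I_n := fun p q => B p q != 0.

Definition partitionable (n : nat) (B : 'M[R]_n) (k : nat) : Prop :=
  (k <= n_comp (edge B) (@predT 'I_n))%N.

End Defs.

From HB Require Import structures.
From mathcomp Require Import all_boot all_order all_algebra all_fingroup.
From mathcomp Require Import reals ring lra classical_sets.
Import Order.TTheory GRing.Theory Num.Theory.
Set Implicit Arguments. Unset Strict Implicit. Unset Printing Implicit Defensive.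
Local Open Scope ring_scope.

(* Write d_p for the degrees and A = D^-1/2 B D^-1/2.
   (i)  Phi^cut is a Frobenius norm, hence nonnegative, and renumbering the
        nodes by a permutation matrix P leaves Phi^T A Phi unchanged since
        P^T P = I.
   (ii) If the graph has at least k components, label each node by a
        component (merging the surplus ones into the last label); the
        indicator matrix weighted by sqrt(d_p) and normalised columnwise lies
        in O_I^+(n,k) and satisfies A Phi = Phi, so Phi^cut(Phi) = 0.
        Conversely, with f = D^-1/2 phi_j the "Dirichlet identity"
          sum_pq B_pq (f_p - f_q)^2 = 2 (1 - (Phi^T A Phi)_jj)
        shows that a small Phi^cut(Phi) forces f to vary little along every
        edge, hence along every simple path; but each column peaks at a node
        where all other columns vanish (disjoint supports), so these k peaks
        lie in k distinct components.  This yields an explicit delta > 0 with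
        Phi^cut(Phi) < delta => k-partitionable, so an infimum 0 does too.
   (iii) O_I^+(n,k) is contained in the Stiefel manifold {Y | Y^T Y = I}, so
        the infimum over the larger set is smaller. *)

Section RealBounds.
Variable R : realType.

Lemma bigmin_gt0 (T : finType) (P : pred T) (f : T -> R) :
  (forall x, P x -> 0 < f x) -> 0 < \big[Num.min/1]_(x | P x) f x.
Proof.
move=> f_gt0; elim/big_ind: _ => // a b a_gt0 b_gt0.
by rewrite lt_min a_gt0.
Qed.

Lemma unit_vector_peak (T : finType) (x0 : T) (x : T -> R) :
  (forall p, 0 <= x p) -> \sum_p x p ^+ 2 = 1 ->
  exists p, 1 <= #|T|%:R * x p.
Proof.
move=> x_ge0 x_unit; case: (@arg_maxP _ _ T x0 predT x isT) => p _ p_max.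
exists p.
have sum_le : \sum_q x q ^+ 2 <= #|T|%:R * x p ^+ 2.
  rewrite mulr_natl -sumr_const; apply: ler_sum => q _.
  by rewrite ler_sqr ?nnegrE ?x_ge0 //; exact: p_max.
have xp_le1 : x p <= 1.
  rewrite -(expr_le1 (n := 2)) ?x_ge0 //.
  by rewrite -x_unit (bigD1 p) //= lerDl sumr_ge0 // => r _; exact: sqr_ge0.
have sq_le : x p ^+ 2 <= x p by rewrite expr2 ler_piMr ?x_ge0.
have card_ge0 : 0 <= #|T|%:R :> R by [].
rewrite x_unit in sum_le; have := x_ge0 p; nra.
Qed.

(* The arithmetic behind the peak estimate: if a >= 1/m and m <= N, then
   s a >= smin a >= smin / N >= m smin / N^2. *)
Lemma peak_lower_bound (m N smin s a : R) :
  0 <= smin -> 0 < N -> m <= N -> smin <= s -> 0 <= a -> 1 <= m * a ->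
  m * (smin / N ^+ 2) <= s * a.
Proof.
move=> smin_ge0 N_gt0 m_le smin_le a_ge0 ma_ge1.
have N_ge0 := ltW N_gt0; have Na_ge1 : 1 <= N * a.
  by apply: le_trans ma_ge1 _; rewrite ler_wpM2r.
have smin_N : N * (smin / N ^+ 2) = smin / N by field; rewrite gt_eqF.
apply: le_trans (ler_wpM2r _ m_le) _; first by rewrite divr_ge0 ?exprn_ge0.
rewrite smin_N; apply: le_trans (ler_wpM2r a_ge0 smin_le).
rewrite -[X in X <= _]mulr1; apply: le_trans (ler_wpM2l _ Na_ge1) _.
  by rewrite divr_ge0.
by rewrite mulrA mulfVK ?gt_eqF.
Qed.

Lemma frob_ge0 m p (M : 'M[R]_(m, p)) : 0 <= frob M.
Proof. exact: sqrtr_ge0. Qed.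

Lemma orthonormal_col m k (M : 'M[R]_(m, k)) j :
  M^T *m M = 1%:M -> \sum_p M p j ^+ 2 = 1.
Proof.
move=> MM; have := congr1 (fun N : 'M[R]_k => N j j) MM; rewrite !mxE eqxx /=.
by move=> col_unit; apply: eq_trans col_unit; apply: eq_bigr => p _; rewrite mxE expr2.
Qed.

Lemma frob_diag m (M : 'M[R]_m) i : M i i <= frob M.
Proof.
have sq_ge0 (a : 'I_m) (b : 'I_m) : 0 <= M a b ^+ 2 by exact: sqr_ge0.
apply: le_trans (ler_norm _) _; rewrite /frob -sqrtr_sqr ler_sqrt; last first.
  by apply: sumr_ge0 => a _; apply: sumr_ge0.
rewrite (bigD1 i) //= (bigD1 i) //= -addrA lerDl.
by rewrite addr_ge0 ?sumr_ge0 // => a _; rewrite sumr_ge0.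
Qed.

Lemma quadratic_form_conj m k (P A : 'M[R]_m) (Phi : 'M[R]_(m, k)) :
  P^T *m P = 1%:M ->
  (P *m Phi)^T *m (P *m A *m P^T) *m (P *m Phi) = Phi^T *m A *m Phi.
Proof.
move=> PP; rewrite trmx_mul !mulmxA -(mulmxA Phi^T P^T P) PP mulmx1.
by rewrite -(mulmxA _ P^T P) PP mulmx1.
Qed.

Lemma perm_mx_orthogonal m (s : 'S_m) :
  (perm_mx s)^T *m perm_mx s = 1%:M :> 'M[R]_m.
Proof. by rewrite tr_perm_mx -perm_mxM mulVg perm_mx1. Qed.

End RealBounds.

Section NormalizedAdjacency.
Variables (R : realType) (n : nat) (B : 'M[R]_n).
Hypothesis hB : adj_ok B.

Definition deg p := degvec B p 0.

Definition dinvsqrt p := (Num.sqrt (deg p))^-1.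

Lemma degE p : deg p = \sum_q B p q.
Proof. by rewrite /deg /degvec mxE; apply: eq_bigr => q _; rewrite mxE mulr1. Qed.

Lemma deg_gt0 p : 0 < deg p.
Proof. by case: hB => _ _ _; apply. Qed.

Lemma sqrt_deg_gt0 p : 0 < Num.sqrt (deg p).
Proof. by rewrite sqrtr_gt0 deg_gt0. Qed.

Lemma dinvsqrt_gt0 p : 0 < dinvsqrt p.
Proof. by rewrite invr_gt0 sqrt_deg_gt0. Qed.

Lemma dinvsqrtK p : dinvsqrt p * Num.sqrt (deg p) = 1.
Proof. by rewrite mulVf // gt_eqF // sqrt_deg_gt0. Qed.

Lemma dinvsqrt_deg p : dinvsqrt p * deg p = Num.sqrt (deg p).
Proof. by rewrite -{1}(sqr_sqrtr (ltW (deg_gt0 p))) expr2 mulrA dinvsqrtK mul1r. Qed.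

Lemma dinvsqrt_sqr_deg p : dinvsqrt p ^+ 2 * deg p = 1.
Proof. by rewrite expr2 -mulrA dinvsqrt_deg dinvsqrtK. Qed.

Lemma normadjE p q : normadj B p q = dinvsqrt p * B p q * dinvsqrt q.
Proof.
by rewrite /normadj /Dmhalf mul_mx_diag mxE mul_diag_mx /dinvsqrt /deg /degvec !mxE.
Qed.

Lemma adj_sym p q : B p q = B q p.
Proof. by case: hB => BT _ _ _; rewrite -{1}BT mxE. Qed.

Lemma adj_ge0 p q : 0 <= B p q.
Proof. by case: hB => _ + _ _; apply. Qed.

Lemma edge_connect_sym : connect_sym (edge B).
Proof. by apply/sym_connect_sym => p q; rewrite /edge adj_sym. Qed.

End NormalizedAdjacency.

Section WeightedIndicator.
Variables (R : realType) (n k : nat) (g : 'I_n -> 'I_k) (w : 'I_n -> R).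
Hypothesis w_gt0 : forall p, 0 < w p.
Hypothesis g_surj : forall j, exists p, g p = j.

Definition block_mass j := \sum_(q | g q == j) w q ^+ 2.

Definition weighted_indicator : 'M[R]_(n, k) :=
  \matrix_(p, j) (if g p == j then w p / Num.sqrt (block_mass j) else 0).

Lemma block_mass_gt0 j : 0 < block_mass j.
Proof.
have [p <-] := g_surj j; rewrite /block_mass (bigD1 p) //=.
by rewrite ltr_pwDl ?exprn_gt0 // sumr_ge0 // => q _; exact: sqr_ge0.
Qed.

Lemma weighted_indicator_orthonormal :
  weighted_indicator^T *m weighted_indicator = 1%:M.
Proof.
apply/matrixP => i j; rewrite !mxE; have mass_gt0 := block_mass_gt0 i.
case: (eqVneq i j) => [<-|ij]; last first.
  rewrite big1 // => p _; rewrite !mxE.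
  by case: (eqVneq (g p) i) => [->|]; rewrite ?(negbTE ij) ?mulr0 ?mul0r.
transitivity (\sum_(p | g p == i) w p ^+ 2 / block_mass i).
  rewrite [RHS]big_mkcond /=; apply: eq_bigr => p _; rewrite !mxE.
  case: (g p == i); last by rewrite mulr0.
  by rewrite -expr2 expr_div_n sqr_sqrtr // ltW.
by rewrite -mulr_suml mulfV // gt_eqF.
Qed.

Lemma weighted_indicator_OIplus : OIplus weighted_indicator.
Proof.
have entry_ge0 p j : 0 <= weighted_indicator p j.
  by rewrite mxE; case: ifP => // _; rewrite divr_ge0 ?sqrtr_ge0 // ltW.
split=> //; split; last exact: weighted_indicator_orthonormal.
exists (fun j => [set p | g p == j]); split.
- by move=> j; have [p gp] := g_surj j; apply/set0Pn; exists p; rewrite inE gp.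
- move=> i j ij; apply/pred0P => p /=; rewrite !inE.
  by apply/negbTE/negP => /andP[/eqP-> /eqP gj]; rewrite gj eqxx in ij.
- by apply/setP => p; rewrite inE; apply/bigcupP; exists (g p); rewrite ?inE.
- move=> p j; rewrite mxE inE; case: ifP => _; last by split => // /eqP.
  split=> // _; rewrite mulf_neq0 ?invr_eq0 ?gt_eqF //.
  by rewrite sqrtr_gt0 block_mass_gt0.
Qed.

End WeightedIndicator.

(* O_I^+(n,k) is nonempty as soon as 1 <= k <= n: label node p by min(p, k-1). *)
Lemma OIplus_exists (R : realType) (n k : nat) :
  (1 <= k <= n)%N -> exists Phi : 'M[R]_(n, k), OIplus Phi.
Proof.
case/andP=> k_gt0 k_le_n; have lt_pred : (k.-1 < k)%N by rewrite ltn_predL.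
pose g (p : 'I_n) : 'I_k := Ordinal (leq_ltn_trans (geq_minr p k.-1) lt_pred).
exists (weighted_indicator g (fun _ => 1)); apply: weighted_indicator_OIplus.
  by move=> _; exact: ltr01.
move=> j; exists (widen_ord k_le_n j); apply/val_inj => /=; apply/minn_idPl.
by rewrite -ltnS prednK.
Qed.

Section ComponentIndicators.
Variables (R : realType) (n k : nat) (B : 'M[R]_n).
Hypothesis hB : adj_ok B.

(* With weights sqrt(d_p) and a labelling constant along edges, every column
   is a fixed vector of A: (A phi)_p = d_p^-1/2 sum_q B_pq = sqrt(d_p) / c. *)
Lemma normadj_indicator_fixed (g : 'I_n -> 'I_k) :
  (forall p q, edge B p q -> g p = g q) ->
  normadj B *m weighted_indicator g (fun p => Num.sqrt (deg B p)) =
  weighted_indicator g (fun p => Num.sqrt (deg B p)).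
Proof.
move=> g_edge; apply/matrixP => p j; rewrite !mxE.
set c := Num.sqrt (block_mass g _ j).
under eq_bigr => q _.
  have -> : normadj B p q * weighted_indicator g (fun p => Num.sqrt (deg B p)) q j
          = dinvsqrt B p * B p q * (if g p == j then c^-1 else 0).
    rewrite normadjE mxE; case: (eqVneq (B p q) 0) => [->|pq]; first by rewrite !mulr0 !mul0r.
    rewrite (g_edge p q pq); case: ifP => _; last by rewrite !mulr0.
    by rewrite mulrA -(mulrA _ (dinvsqrt B q)) dinvsqrtK // mulr1.
  over.
rewrite -mulr_suml -mulr_sumr -degE dinvsqrt_deg //.
by case: ifP => _; rewrite ?mulr0.
Qed.

Lemma phicut_fixed m (A : 'M[R]_m) (Phi : 'M[R]_(m, k)) :
  A *m Phi = Phi -> Phi^T *m Phi = 1%:M -> phicut A Phi = 0.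
Proof.
move=> APhi PhiPhi; rewrite /phicut -mulmxA APhi PhiPhi subrr /frob.
rewrite big1 ?sqrtr0 // => i _; rewrite big1 // => j _.
by rewrite mxE expr2 mulr0.
Qed.

(* At least k components: a surjective labelling by k labels that is
   constant along edges (surplus components share the last label). *)
Lemma partitionable_labelling : (0 < k)%N -> partitionable B k ->
  exists2 g : 'I_n -> 'I_k,
    (forall p q, edge B p q -> g p = g q) & (forall j, exists p, g p = j).
Proof.
move=> k_gt0 k_le; have lt_pred : (k.-1 < k)%N by rewrite ltn_predL.
set rs := enum (roots (edge B)).
have k_le_rs : (k <= size rs)%N.
  rewrite -cardE; apply: leq_trans k_le _; rewrite /n_comp_mem.
  by apply: subset_leq_card; apply/fintype.subsetP => x; rewrite !inE => /andP[].
pose g (p : 'I_n) : 'I_k :=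
  Ordinal (leq_ltn_trans (geq_minr (index (fingraph.root (edge B) p) rs) k.-1) lt_pred).
exists g => [p q pq|j].
  have same_root : fingraph.root (edge B) p = fingraph.root (edge B) q.
    by apply/(fingraph.rootP (edge_connect_sym hB)); apply: connect1.
  by apply/val_inj; rewrite /= same_root.
have j_lt : (j < size rs)%N by apply: leq_trans k_le_rs.
have x0 : 'I_n by move: j_lt; clear -rs; case: rs.
exists (nth x0 rs j); apply/val_inj => /=.
have : nth x0 rs j \in rs by exact: mem_nth.
rewrite mem_enum => /eqP ->; rewrite index_uniq ?enum_uniq //.
by apply/minn_idPl; rewrite -ltnS prednK.
Qed.

Lemma partitionable_phicut0 : (0 < k)%N -> partitionable B k ->
  exists2 Phi : 'M[R]_(n, k), OIplus Phi & phicut (normadj B) Phi = 0.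
Proof.
move=> k_gt0 k_part; have [g g_edge g_surj] := partitionable_labelling k_gt0 k_part.
have Phi_ok := weighted_indicator_OIplus (sqrt_deg_gt0 hB) g_surj.
exists (weighted_indicator g (fun p => Num.sqrt (deg B p))) => //.
apply: phicut_fixed; first exact: normadj_indicator_fixed.
by case: Phi_ok => [[_ ->]].
Qed.

End ComponentIndicators.

Section Dirichlet.
Variables (R : realType) (n k : nat) (B : 'M[R]_n).
Hypothesis hB : adj_ok B.

Definition scaled_col (Phi : 'M[R]_(n, k)) j p := dinvsqrt B p * Phi p j.

Lemma dirichlet_identity (Phi : 'M[R]_(n, k)) j : Phi^T *m Phi = 1%:M ->
  \sum_p \sum_q B p q * (scaled_col Phi j p - scaled_col Phi j q) ^+ 2 =
  2 * (1 - (Phi^T *m normadj B *m Phi) j j).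
Proof.
move=> PhiPhi; set f := scaled_col Phi j.
have cross : (Phi^T *m normadj B *m Phi) j j = \sum_p \sum_q B p q * (f p * f q).
  rewrite mxE exchange_big /=; apply: eq_bigr => q _; rewrite mxE mulr_suml.
  by apply: eq_bigr => p _; rewrite normadjE mxE /f /scaled_col; ring.
have unit : \sum_p \sum_q B p q * f p ^+ 2 = 1.
  rewrite -(orthonormal_col j PhiPhi); apply: eq_bigr => p _.
  rewrite -mulr_suml -degE /f /scaled_col exprMn mulrA [deg B p * _]mulrC.
  by rewrite dinvsqrt_sqr_deg // mul1r.
have swap : \sum_p \sum_q B p q * f q ^+ 2 = \sum_p \sum_q B p q * f p ^+ 2.
  rewrite exchange_big /=; apply: eq_bigr => p _; apply: eq_bigr => q _.
  by rewrite (adj_sym hB).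
have expand : \sum_p \sum_q B p q * (f p - f q) ^+ 2 =
   \sum_p \sum_q B p q * f p ^+ 2 + \sum_p \sum_q B p q * f q ^+ 2
   - 2 * \sum_p \sum_q B p q * (f p * f q).
  rewrite mulr_sumr -big_split -sumrB /=; apply: eq_bigr => p _.
  by rewrite mulr_sumr -big_split -sumrB /=; apply: eq_bigr => q _; ring.
by rewrite expand swap cross unit; ring.
Qed.

Lemma edge_energy_le (Phi : 'M[R]_(n, k)) j p q : Phi^T *m Phi = 1%:M ->
  B p q * (scaled_col Phi j p - scaled_col Phi j q) ^+ 2 <= 2 * phicut (normadj B) Phi.
Proof.
move=> PhiPhi; set F := fun a b => B a b * (scaled_col Phi j a - scaled_col Phi j b) ^+ 2.
have F_ge0 a b : 0 <= F a b by rewrite mulr_ge0 ?adj_ge0 ?sqr_ge0.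
have diag_le : 1 - (Phi^T *m normadj B *m Phi) j j <= phicut (normadj B) Phi.
  by have := frob_diag (1%:M - Phi^T *m normadj B *m Phi) j; rewrite !mxE eqxx.
have : F p q <= \sum_a \sum_b F a b.
  rewrite (bigD1 p) //= (bigD1 q) //= -addrA lerDl.
  by rewrite addr_ge0 ?sumr_ge0 // => a _; rewrite sumr_ge0.
by rewrite /F dirichlet_identity //; lra.
Qed.

Lemma edge_jump_le (Phi : 'M[R]_(n, k)) j u v (w eta : R) : Phi^T *m Phi = 1%:M ->
  0 < w -> w <= B u v -> 0 < eta -> phicut (normadj B) Phi < w * eta ^+ 2 / 2 ->
  `|scaled_col Phi j u - scaled_col Phi j v| <= eta.
Proof.
move=> PhiPhi w_gt0 w_le eta_gt0 cut_lt.
have := edge_energy_le j u v PhiPhi; set D := _ - _ => energy.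
have : B u v * D ^+ 2 < B u v * eta ^+ 2.
  apply: le_lt_trans energy _; apply: lt_le_trans (ler_wpM2r (sqr_ge0 _) w_le).
  by move: cut_lt; lra.
rewrite ltr_pM2l ?(lt_le_trans w_gt0) // -real_normK ?num_real //.
by rewrite ltr_sqr ?nnegrE ?normr_ge0 ?(ltW eta_gt0) // => /ltW.
Qed.

Lemma path_variation (f : 'I_n -> R) eta :
  (forall u v, edge B u v -> `|f u - f v| <= eta) ->
  forall x s, path (edge B) x s -> `|f x - f (last x s)| <= (size s)%:R * eta.
Proof.
move=> f_edge x s; elim: s x => [|y s IH] x /=; first by rewrite subrr normr0 mul0r.
case/andP=> xy ys; have := f_edge _ _ xy; have := IH _ ys.
have := ler_distD (f y) (f x) (f (last y s)).
rewrite -addn1 natrD mulrDl mul1r; lra.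
Qed.

(* k functions with small jumps along edges, each peaking (above n * eta) at
   a node where all the others vanish, force k distinct components: the
   peaks cannot be joined by a simple path, which has fewer than n edges. *)
Lemma separated_peaks (f : 'I_k -> 'I_n -> R) (x : 'I_k -> 'I_n) eta :
  0 < eta ->
  (forall j u v, edge B u v -> `|f j u - f j v| <= eta) ->
  (forall i j, i != j -> f i (x j) = 0) ->
  (forall j, n%:R * eta <= f j (x j)) ->
  partitionable B k.
Proof.
move=> eta_gt0 f_edge f_zero f_peak.
have root_inj : injective (fun j => fingraph.root (edge B) (x j)).
  move=> i j /= same_root; apply/eqP/negPn/negP => ij.
  move/(fingraph.rootP (edge_connect_sym hB))/connectP: same_root => [s s_path s_last].
  case: (shortenP s_path) s_last => s' s'_path s'_uniq _ s'_last {s s_path}.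
  have s'_lt : (size s' < n)%N.
    have := max_card (mem (x i :: s')); rewrite card_ord.
    by move/card_uniqP: s'_uniq => -> /=.
  have := path_variation (f_edge i) s'_path; rewrite -s'_last (f_zero i j ij) subr0.
  move: s'_lt; rewrite -(ler_nat R) => /(ler_wpM2r (ltW eta_gt0)).
  have := f_peak i; rewrite -addn1 natrD mulrDl mul1r.
  have := ler_norm (f i (x i)); lra.
have := card_image root_inj (mem predT); rewrite card_ord /partitionable => <-.
rewrite /n_comp_mem; apply: subset_leq_card; apply/fintype.subsetP => y /mapP[j _ ->].
by rewrite !inE /= fingraph.roots_root //; exact: edge_connect_sym.
Qed.

End Dirichlet.

Section SmallCut.
Variables (R : realType) (n k : nat) (B : 'M[R]_n).
Hypothesis hB : adj_ok B.

(* The quantitative core of (ii): an explicit delta > 0, depending only on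
   the smallest edge weight and the smallest entry of D^-1/2, such that
   Phi^cut(Phi) < delta already forces k components. *)
Lemma small_phicut_partitionable : (k <= n)%N ->
  exists2 delta : R, 0 < delta & forall Phi : 'M[R]_(n, k),
    OIplus Phi -> phicut (normadj B) Phi < delta -> partitionable B k.
Proof.
move=> k_le_n.
set wmin := \big[Num.min/1]_(pq : 'I_n * 'I_n | edge B pq.1 pq.2) B pq.1 pq.2.
set smin := \big[Num.min/1]_(p : 'I_n) dinvsqrt B p.
have wmin_gt0 : 0 < wmin.
  by apply: bigmin_gt0 => pq pq_edge; rewrite lt0r (adj_ge0 hB) andbT.
have smin_gt0 : 0 < smin by apply: bigmin_gt0 => p _; exact: (dinvsqrt_gt0 hB).
have N_gt0 : 0 < n.+1%:R :> R by rewrite ltr0n.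
set eta := smin / n.+1%:R ^+ 2; have eta_gt0 : 0 < eta by rewrite divr_gt0 ?exprn_gt0.
exists (wmin * eta ^+ 2 / 2) => [|Phi [[[Rs [_ Rs_disj _ Rs_supp]] PhiPhi] Phi_ge0] cut_lt].
  by rewrite divr_gt0 // mulr_gt0 // exprn_gt0.
have jump j u v : edge B u v -> `|scaled_col B Phi j u - scaled_col B Phi j v| <= eta.
  move=> uv; apply: (edge_jump_le hB j PhiPhi wmin_gt0 _ eta_gt0 cut_lt).
  exact: (@bigmin_le_cond _ _ _ 1 (u, v) (fun pq => edge B pq.1 pq.2) _ uv).
have peak j : exists p, 1 <= n%:R * Phi p j.
  have := unit_vector_peak (widen_ord k_le_n j) (Phi_ge0^~ j) (orthonormal_col j PhiPhi).
  by rewrite card_ord.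
pose x j := xchoose (peak j); have x_peak j : 1 <= n%:R * Phi (x j) j := xchooseP (peak j).
have x_supp j : x j \in Rs j.
  apply/Rs_supp/eqP => x0; have := x_peak j; rewrite x0 mulr0; lra.
apply: (separated_peaks hB (x := x) eta_gt0 jump) => [i j ij|j].
  rewrite /scaled_col; case: (eqVneq (Phi (x j) i) 0) => [->|/Rs_supp xi]; first by rewrite mulr0.
  by have := disjointFr (Rs_disj _ _ ij) xi; rewrite x_supp.
have smin_le : smin <= dinvsqrt B (x j) by exact: bigmin_le.
by apply: peak_lower_bound (ltW smin_gt0) N_gt0 _ smin_le (Phi_ge0 _ _) (x_peak j);
  rewrite ler_nat.
Qed.

End SmallCut.

Section Infimum.
Variables (R : realType) (n k : nat) (B : 'M[R]_n).
Hypotheses (hB : adj_ok B) (k_range : (1 <= k <= n)%N).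

Definition cut_values : set R :=
  fun x => exists Phi : 'M[R]_(n, k), OIplus Phi /\ x = phicut (normadj B) Phi.

Lemma cut_values_nonempty : (cut_values !=set0)%classic.
Proof. by have [Phi Phi_ok] := OIplus_exists R k_range; exists (phicut (normadj B) Phi), Phi. Qed.

Lemma cut_values_lbound : lbound cut_values 0.
Proof. by move=> _ [Phi [_ ->]]; exact: frob_ge0. Qed.

Lemma phicutG_ge0 : 0 <= phicutG k (normadj B).
Proof. exact: lb_le_inf cut_values_nonempty cut_values_lbound. Qed.

Lemma phicutG_le (Phi : 'M[R]_(n, k)) :
  OIplus Phi -> phicutG k (normadj B) <= phicut (normadj B) Phi.
Proof. by move=> Phi_ok; apply: (ge_inf (ex_intro _ 0 cut_values_lbound)); exists Phi. Qed.

Lemma phicutG_eq0 : phicutG k (normadj B) = 0 <-> partitionable B k.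
Proof.
case/andP: k_range => k_gt0 k_le_n; split=> [cutG0 | k_part].
  have [delta delta_gt0 small_cut] := small_phicut_partitionable hB k_le_n.
  have [_ [Phi [Phi_ok ->]]] := @inf_lt _ cut_values _ cut_values_nonempty
    (eq_ind_r (fun x => x < delta) delta_gt0 cutG0).
  exact: small_cut.
have [Phi Phi_ok cut0] := partitionable_phicut0 hB k_gt0 k_part.
by apply/le_anti; rewrite phicutG_ge0 andbT -cut0 phicutG_le.
Qed.

(* Cheeger-type inequality: O_I^+(n,k) lies in the Stiefel manifold. *)
Lemma Lk_le_phicutG : Lk k (normadj B) <= phicutG k (normadj B).
Proof.
apply: lb_le_inf cut_values_nonempty _ => _ [Phi [[[_ PhiPhi] _] ->]].
apply: ge_inf; last by exists Phi.
by exists 0 => _ [Y [_ ->]]; exact: frob_ge0.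
Qed.

End Infimum.

Theorem proposition3 (R : realType) (n k : nat) (B : 'M[R]_n) :
  adj_ok B -> (1 <= k <= n)%N ->
  let A := normadj B in
  [/\ (forall Phi : 'M[R]_(n, k), OIplus Phi ->
         0 <= phicut A Phi /\
         (forall s : 'S_n,
            frob (1%:M - (perm_mx s *m Phi)^T *m (perm_mx s *m A *m (perm_mx s)^T)
                           *m (perm_mx s *m Phi)) = phicut A Phi)),
      (phicutG k A = 0 <-> partitionable B k)
    & Lk k A <= phicutG k A].
Proof.
move=> hB k_range A; split.
- move=> Phi _; split=> [|s]; first exact: frob_ge0.
  by rewrite quadratic_form_conj ?perm_mx_orthogonal.
- exact: phicutG_eq0.
- exact: Lk_le_phicutG.
Qed.
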